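(* Let $k\ge1$ be an integer, $p$ a prime, $\theta>0$, and $\mathbf u=(u_1,\dots,u_{2k})\in\mathbb C^{2k}$ with $\Re(u_i)\ge\theta$ for all $i$. Then $$B_{p,2k}(\mathbf u;0)=\prod_{1\le i\le j\le2k}\Big(1-\frac1{p^{u_i+u_j}}\Big)^{-1}C_{p,2k}(\mathbf u),$$ where $$C_{p,2k}(\mathbf u)=\prod_{1\le i<j\le2k}\Big(1-\frac1{p^{u_i+u_j}}\Big)\sum_{\substack{A\subseteq\{1,\dots,2k\}\\|A|\text{ even}}}\prod_{i\in A}\frac1{p^{u_i}}=1+O\Big(\frac1{p^{4\theta}}\Big).$$
   Context: For a prime $p$, an integer $k\ge1$, $\mathbf u\in\mathbb C^k$ and $a\in\{0,1\}$, $$B_{p,k}(\mathbf u;a)=\sum_{\substack{n_1,\dots,n_k\ge0\\ n_1+\dots+n_k\equiv a\ (\mathrm{mod}\ 2)}}\frac1{p^{n_1u_1+\dots+n_ku_k}}.$$ *)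

From HB Require Import structures.
From mathcomp Require Import all_boot all_order all_algebra.
From mathcomp Require Import complex.
From mathcomp Require Import all_classical all_reals all_analysis.
Set Implicit Arguments.
Unset Strict Implicit.
Unset Printing Implicit Defensive.
Import Order.TTheory GRing.Theory Num.Theory.
Import numFieldTopology.Exports numFieldNormedType.Exports.
Local Open Scope ring_scope.

Definition ppow {R : realType} (p : nat) (s : R[i]) : R[i] :=
  let L := ln (p%:R : R) in
  Complex (expR (complex.Re s * L) * cos (complex.Im s * L))
          (expR (complex.Re s * L) * sin (complex.Im s * L)).

(** Partial sums of B_{p,k}(u;a) over the box 0 <= n_i < N. *)
Definition B_partial {R : realType} (p k : nat) (u : 'I_k -> R[i]) (a N : nat)
  : R[i] :=
  \sum_(n : {ffun 'I_k -> 'I_N} | ((\sum_(i < k) (n i : nat)) %% 2 == a)%N)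
     (ppow p (\sum_(i < k) (n i : nat)%:R * u i))^-1.

Definition C_factor {R : realType} (p k : nat) (u : 'I_(2 * k) -> R[i]) : R[i] :=
  (\prod_(i < 2 * k) \prod_(j < 2 * k | (i < j)%N) (1 - (ppow p (u i + u j))^-1))
  * \sum_(A : {set 'I_(2 * k)} | ~~ odd #|A|) \prod_(i in A) (ppow p (u i))^-1.

(** Topology / normed structure on R[i] (from its numClosedFieldType norm). *)
HB.instance Definition _ (R : realType) := PseudoPointedMetric.copy R[i] (R[i])^o.

From HB Require Import structures.
From mathcomp Require Import all_boot all_order all_algebra.
From mathcomp Require Import complex.
From mathcomp Require Import all_classical all_reals all_analysis.
From mathcomp Require Import ring lra zify.
Import Order.TTheory GRing.Theory Num.Theory.
Import numFieldTopology.Exports numFieldNormedType.Exports.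
Import Normc.
Local Open Scope ring_scope.

(* Put x_i = p^{-u_i}, so |x_i| <= t := p^{-theta} < 1.  Summing over the parity of
   n_1 + ... + n_2k, the partial sums of B_{p,2k}(u;0) tend to the even part
   (1/2) (prod_i (1 - x_i)^{-1} + prod_i (1 + x_i)^{-1}) of a product of geometric
   series.  Since sum_{|A| even} x^A = (1/2) (prod_i (1 + x_i) + prod_i (1 - x_i)) and
   (1 - x^2)^{-1} (1 + x) = (1 - x)^{-1}, this limit is
   prod_{i <= j} (1 - x_i x_j)^{-1} C(x) with C(x) = prod_{i < j} (1 - x_i x_j) sum_{|A| even} x^A.
   For the bound, expanding both factors of C(x) over subsets gives
   prod_{i < j} (1 - x_i x_j) = 1 - e_2 + O(t^4) and sum_{|A| even} x^A = 1 + e_2 + O(t^4),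
   where e_2 = sum_{i < j} x_i x_j, and the terms of order t^2 cancel in the product. *)

Section SubsetReindexing.
Variables (T : Type) (idx : T) (op : Monoid.com_law idx).

Lemma big_card1 (I : finType) (f : {set I} -> T) :
  \big[op/idx]_(A : {set I} | #|A| == 1%N) f A = \big[op/idx]_i f [set i].
Proof.
rewrite -(big_imset _ (in2W set1_inj)) /=; apply: eq_bigl => A.
by apply/cards1P/imsetP => [[i ->]|[i _ ->]]; exists i.
Qed.

Lemma big_card2 n (f : {set 'I_n} -> T) :
  \big[op/idx]_(A : {set 'I_n} | #|A| == 2%N) f A
  = \big[op/idx]_(i < n) \big[op/idx]_(j < n | (i < j)%N) f [set i; j].
Proof.
pose h (q : 'I_n * 'I_n) := [set q.1; q.2].
have h_inj : {in [pred q : 'I_n * 'I_n | (q.1 < q.2)%N] &, injective h}.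
  move=> [a b] [c d]; rewrite !inE /= => ab cd; rewrite /h => hE.
  have mem (x y z : 'I_n) : x \in [set y; z] -> (x : nat) = y \/ (x : nat) = z.
    by rewrite !inE => /orP[]/eqP->; [left|right].
  have /mem ? : a \in [set c; d] by rewrite -hE set21.
  have /mem ? : b \in [set c; d] by rewrite -hE set22.
  have /mem ? : c \in [set a; b] by rewrite hE set21.
  have /mem ? : d \in [set a; b] by rewrite hE set22.
  by congr pair; apply: ord_inj; lia.
rewrite pair_big_dep /= -(big_imset _ h_inj) /=; apply: eq_bigl => A.
apply/cards2P/imsetP => [[a [b [ab ->]]]|[[a b]]]; last first.
  by rewrite inE /= => lt_ab ->; exists a, b; rewrite -val_eqE neq_ltn lt_ab.
case: (ltngtP a b) => [lt_ab|lt_ba|eq_ab]; last by rewrite (val_inj eq_ab) eqxx in ab.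
- by exists (a, b).
- by exists (b, a); rewrite // /h finset.setUC.
Qed.

End SubsetReindexing.

Section SubsetExpansions.
Context {F : comPzRingType}.
Implicit Types (I : finType).

Lemma prod1D_subsets I (z : I -> F) :
  \prod_i (1 + z i) = \sum_(A : {set I}) \prod_(i in A) z i.
Proof.
under eq_bigr do rewrite addrC.
by rewrite bigA_distr; apply: eq_bigr => A _; rewrite [RHS]big_mkcond.
Qed.

Lemma prod1D_sub_first_order I (z : I -> F) :
  \prod_i (1 + z i) - (1 + \sum_i z i)
  = \sum_(A : {set I} | (1 < #|A|)%N) \prod_(i in A) z i.
Proof.
rewrite prod1D_subsets (bigID (fun A : {set I} => (1 < #|A|)%N)) /=.
suff -> : \sum_(A : {set I} | ~~ (1 < #|A|)%N) \prod_(i in A) z i = 1 + \sum_i z i.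
  by rewrite addrK.
rewrite (bigID (fun A : {set I} => #|A| == 1%N)) /= addrC; congr (_ + _).
  rewrite (eq_bigl (pred1 finset.set0)) ?big_pred1_eq ?big_set0 // => A.
  by rewrite /= -cards_eq0; case: #|A| => [|[|]].
rewrite (eq_bigl (fun A : {set I} => #|A| == 1%N)) ?big_card1; last first.
  by move=> A; case: #|A| => [|[|]].
by apply: eq_bigr => i _; rewrite big_set1.
Qed.

Lemma sum_even_subsets_sub_second_order I (x : I -> F) :
  \sum_(A : {set I} | ~~ odd #|A|) \prod_(i in A) x i
    - (1 + \sum_(A : {set I} | #|A| == 2%N) \prod_(i in A) x i)
  = \sum_(A : {set I} | ~~ odd #|A| && (3 < #|A|)%N) \prod_(i in A) x i.
Proof.
rewrite (bigID (fun A : {set I} => (3 < #|A|)%N)) /=.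
suff -> : \sum_(A : {set I} | ~~ odd #|A| && ~~ (3 < #|A|)%N) \prod_(i in A) x i
          = 1 + \sum_(A : {set I} | #|A| == 2%N) \prod_(i in A) x i.
  by rewrite addrK.
rewrite (bigID (fun A : {set I} => #|A| == 2%N)) /= addrC; congr (_ + _).
  rewrite (eq_bigl (pred1 finset.set0)) ?big_pred1_eq ?big_set0 // => A.
  by rewrite /= -cards_eq0; case: #|A| => [|[|[|[|n]]]] //=; rewrite andbF.
by apply: eq_bigl => A; case: #|A| => [|[|[|[|n]]]] //=; rewrite andbF.
Qed.

End SubsetExpansions.

Section EvenSums.
Context {F : numFieldType}.
Implicit Types (I : finType).

Lemma sum_even_weightE I (w : I -> nat) (f : I -> F) :
  \sum_(j | ~~ odd (w j)) f j = 2^-1 * (\sum_j f j + \sum_j (-1) ^+ w j * f j).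
Proof.
rewrite -big_split /= big_mkcond mulr_sumr; apply: eq_bigr => j _.
rewrite -signr_odd; case: (odd (w j)) => /=; first by rewrite mulN1r subrr mulr0.
by rewrite expr0 mul1r -mulr2n -[f j *+ 2]mulr_natl mulKf ?pnatr_eq0.
Qed.

Lemma sum_even_subsetsE I (x : I -> F) :
  \sum_(A : {set I} | ~~ odd #|A|) \prod_(i in A) x i
  = 2^-1 * (\prod_i (1 + x i) + \prod_i (1 - x i)).
Proof.
rewrite sum_even_weightE !prod1D_subsets; congr (_ * (_ + _)).
by apply: eq_bigr => A _; rewrite prodrN.
Qed.

End EvenSums.

Definition C_poly {F : comPzRingType} {n} (x : 'I_n -> F) : F :=
  (\prod_(i < n) \prod_(j < n | (i < j)%N) (1 - x i * x j))
  * \sum_(A : {set 'I_n} | ~~ odd #|A|) \prod_(i in A) x i.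

Section GeometricProducts.
Context {F : numFieldType}.

Lemma subr1_neq0 (a : F) : `|a| < 1 -> 1 - a != 0.
Proof. by move=> a_lt1; rewrite subr_eq0; apply: contraTneq a_lt1 => <-; rewrite normr1 ltxx. Qed.

Lemma prodV_leq_mul_prod_ltn n (a : 'I_n -> 'I_n -> F) :
  (forall i j : 'I_n, (i < j)%N -> a i j != 0) ->
  (\prod_(i < n) \prod_(j < n | (i <= j)%N) (a i j)^-1)
  * \prod_(i < n) \prod_(j < n | (i < j)%N) a i j
  = \prod_i (a i i)^-1.
Proof.
move=> a_neq0; rewrite -big_split; apply: eq_bigr => i _ /=.
rewrite (bigD1 i) //= -mulrA prodfV.
rewrite (eq_bigl (fun j : 'I_n => (i < j)%N)) => [|j]; last by rewrite ltn_neqAle andbC eq_sym.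
by rewrite mulVf ?mulr1 //; apply/prodf_neq0 => j /a_neq0.
Qed.

Lemma invr_1subXX_mul1D (a : F) : 1 + a != 0 -> (1 - a * a)^-1 * (1 + a) = (1 - a)^-1.
Proof.
move=> a1; have -> : 1 - a * a = (1 - a) * (1 + a) by ring.
by rewrite invfM mulfVK.
Qed.

Lemma even_geometric_productsE n (x : 'I_n -> F) : (forall i, `|x i| < 1) ->
  2^-1 * (\prod_(i < n) (1 - x i)^-1 + \prod_(i < n) (1 + x i)^-1)
  = (\prod_(i < n) \prod_(j < n | (i <= j)%N) (1 - x i * x j)^-1) * C_poly x.
Proof.
move=> x_lt1; have xx_neq0 i j : 1 - x i * x j != 0.
  by apply: subr1_neq0; rewrite normrM mulr_ilt1.
rewrite /C_poly mulrA prodV_leq_mul_prod_ltn // sum_even_subsetsE.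
rewrite [RHS]mulrCA [in RHS]mulrDr -!big_split /=; congr (_ * (_ + _)); apply: eq_bigr => i _.
  by rewrite invr_1subXX_mul1D // -[x i]opprK subr1_neq0 ?normrN.
by rewrite -[x i * x i]mulrNN invr_1subXX_mul1D ?opprK // subr1_neq0.
Qed.

End GeometricProducts.

Local Open Scope complex_scope.

Section ComplexNorm.
Context {R : rcfType}.
Implicit Types (z : R[i]).

Lemma normc_ge0 z : 0 <= normc z.
Proof. by case: z => a b; exact: sqrtr_ge0. Qed.

Lemma normr_normc z : `|z| = (normc z)%:C.
Proof. by case: z. Qed.

Lemma normc_prod (I : Type) (r : seq I) (P : pred I) (f : I -> R[i]) :
  normc (\prod_(i <- r | P i) f i) = \prod_(i <- r | P i) normc (f i).
Proof. exact: (big_morph _ (@normcM R) (normc1 R)). Qed.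

Lemma normc_sum_le (I : Type) (r : seq I) (P : pred I) (f : I -> R[i]) :
  normc (\sum_(i <- r | P i) f i) <= \sum_(i <- r | P i) normc (f i).
Proof. exact: (ler_norm_sum (V := Rcomplex R)). Qed.

Lemma normc_sum_subsets_le (I : finType) (P : pred {set I}) (z : I -> R[i]) (s : R) k :
  0 <= s <= 1 -> (forall i, normc (z i) <= s) -> (forall A, P A -> k <= #|A|)%N ->
  normc (\sum_(A | P A) \prod_(i in A) z i) <= #|{set I}|%:R * s ^+ k.
Proof.
move=> /andP[s_ge0 s_le1] z_le P_card; apply: le_trans (normc_sum_le _ _ _ _) _.
apply: (@le_trans _ _ (\sum_(A : {set I}) s ^+ k)); last by rewrite sumr_const mulr_natl.
rewrite [X in _ <= X](bigID P) /= -[X in X <= _]addr0; apply: lerD.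
  apply: ler_sum => A PA; rewrite normc_prod.
  apply: le_trans (ler_wiXn2l s_ge0 s_le1 (P_card A PA)); rewrite -prodr_const.
  by apply: ler_prod => i _; rewrite normc_ge0 z_le.
by apply: sumr_ge0 => A _; rewrite exprn_ge0.
Qed.

Lemma normc_mul_sub1_le (e d f : R[i]) (c t : R) :
  0 <= c -> 0 <= t <= 1 ->
  normc e <= c * t ^+ 2 -> normc d <= c * t ^+ 4 -> normc f <= c * t ^+ 4 ->
  normc ((1 - e + d) * (1 + e + f) - 1) <= (4 * c ^+ 2 + 2 * c) * t ^+ 4.
Proof.
move=> c_ge0 /andP[t_ge0 t_le1] e_le d_le f_le.
have -> : (1 - e + d) * (1 + e + f) - 1 = d * (1 + e + f) + (1 - e) * f - e * e by ring.
have t2_le1 : t ^+ 2 <= 1 by rewrite exprn_ile1.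
have t4E : t ^+ 4 = t ^+ 2 * t ^+ 2 by rewrite -exprD.
have e_le1 : normc e <= c by apply: le_trans e_le _; rewrite ler_piMr.
have f_le1 : normc f <= c.
  by apply: le_trans f_le _; rewrite ler_piMr // exprn_ile1.
have ef_le : normc (1 + e + f) <= 1 + 2 * c.
  apply: le_trans (le_normcD _ _) _; apply: le_trans (lerD (le_normcD _ _) (lexx _)) _.
  rewrite normc1; lra.
have e1_le : normc (1 - e) <= 1 + c.
  by apply: le_trans (le_normcD _ _) _; rewrite normc1 normcN lerD2l.
have d0 := normc_ge0 d; have e0 := normc_ge0 e; have f0 := normc_ge0 f.
have b1 := ler_pM d0 (normc_ge0 _) d_le ef_le.
have b2 := ler_pM (normc_ge0 _) f0 e1_le f_le.
have b3 := ler_pM e0 e0 e_le e_le.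
apply: le_trans (le_normcD _ _) _; rewrite normcN.
apply: le_trans (lerD (le_normcD _ _) (lexx _)) _.
rewrite !normcM; rewrite t4E in b1 b2 *; lra.
Qed.

End ComplexNorm.

Lemma C_poly_sub1_bigO (R : rcfType) n : exists K : R, forall (x : 'I_n -> R[i]) (t : R),
  0 <= t <= 1 -> (forall i, normc (x i) <= t) -> normc (C_poly x - 1) <= K * t ^+ 4.
Proof.
pose c : R := (#|{set 'I_n}| + #|{set {set 'I_n}}|)%:R.
exists (4 * c ^+ 2 + 2 * c) => x t t01 x_le; have [t_ge0 t_le1] := andP t01.
have t2_01 : 0 <= t ^+ 2 <= 1 by rewrite exprn_ge0 ?exprn_ile1.
pose e2 := \sum_(A : {set 'I_n} | #|A| == 2%N) \prod_(i in A) x i.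
(* The product over pairs i < j is rewritten as a product over all subsets A of
   'I_n, with trivial factors (z A = 0) off the 2-subsets. *)
pose z (A : {set 'I_n}) := if #|A| == 2%N then - \prod_(i in A) x i else 0.
have z_le A : normc (z A) <= t ^+ 2.
  rewrite /z; case: eqP => [card2|_]; last by rewrite normc0 exprn_ge0.
  rewrite normcN normc_prod -card2 -prodr_const.
  by apply: ler_prod => i _; rewrite normc_ge0 x_le.
pose d := \sum_(B : {set {set 'I_n}} | (1 < #|B|)%N) \prod_(A in B) z A.
pose f := \sum_(A : {set 'I_n} | ~~ odd #|A| && (3 < #|A|)%N) \prod_(i in A) x i.
have D_eq : \prod_(i < n) \prod_(j < n | (i < j)%N) (1 - x i * x j) = 1 - e2 + d.
  have -> : \prod_(i < n) \prod_(j < n | (i < j)%N) (1 - x i * x j)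
            = \prod_(A : {set 'I_n} | #|A| == 2%N) (1 - \prod_(i in A) x i).
    rewrite big_card2; apply: eq_bigr => i _; apply: eq_bigr => j lt_ij.
    by rewrite big_setU1 ?big_set1 // inE; apply: contraTneq lt_ij => ->; rewrite ltnn.
  have -> : \prod_(A : {set 'I_n} | #|A| == 2%N) (1 - \prod_(i in A) x i)
            = \prod_A (1 + z A).
    by rewrite big_mkcond; apply: eq_bigr => A _; rewrite /z; case: ifP; rewrite ?addr0.
  have sum_z : \sum_A z A = - e2 by rewrite /e2 /z -sumrN [RHS]big_mkcond.
  have := prod1D_sub_first_order _ z; rewrite sum_z => /eqP; rewrite subr_eq => /eqP ->.
  by rewrite addrC.
have E_eq : \sum_(A : {set 'I_n} | ~~ odd #|A|) \prod_(i in A) x i = 1 + e2 + f.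
  by rewrite /f -sum_even_subsets_sub_second_order addrC subrK.
rewrite /C_poly D_eq E_eq; apply: normc_mul_sub1_le => //.
- apply: le_trans (normc_sum_subsets_le _ _ _ _ 2 t01 x_le _) _ => [A /eqP-> //|].
  by rewrite ler_wpM2r ?exprn_ge0 // ler_nat leq_addr.
- apply: le_trans (normc_sum_subsets_le _ _ _ _ 2 t2_01 z_le _) _ => [//|].
  by rewrite -exprM ler_wpM2r ?exprn_ge0 // ler_nat leq_addl.
- apply: le_trans (normc_sum_subsets_le _ _ _ _ 4 t01 x_le _) _ => [A /andP[_ //]|].
  by rewrite ler_wpM2r ?exprn_ge0 // ler_nat leq_addr.
Qed.

Section PrimePowers.
Context {R : realType}.
Implicit Types (a b s : R[i]) (p : nat).

Lemma ppowD p a b : ppow p (a + b) = ppow p a * ppow p b.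
Proof.
case: a b => [ra ia] [rb ib]; rewrite /ppow /= !mulrDl expRD cosD sinD.
by apply/eqP; rewrite eq_complex /=; apply/andP; split; apply/eqP; ring.
Qed.

Lemma ppow0 p : ppow p 0 = 1 :> R[i].
Proof. by rewrite /ppow /= !mul0r expR0 cos0 sin0 !mul1r. Qed.

Lemma ppowMn p n s : ppow p (n%:R * s) = ppow p s ^+ n.
Proof.
elim: n => [|n IHn]; first by rewrite mul0r ppow0 expr0.
by rewrite -natr1 mulrDl mul1r ppowD IHn exprSr.
Qed.

Lemma ppow_sum p (I : Type) (r : seq I) (P : pred I) (f : I -> R[i]) :
  ppow p (\sum_(i <- r | P i) f i) = \prod_(i <- r | P i) ppow p (f i).
Proof. exact: (big_morph _ (ppowD p) (ppow0 p)). Qed.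

Lemma ppowR p (a : R) : ppow p a%:C = (expR (a * ln (p%:R : R)))%:C.
Proof. by rewrite /ppow /= mul0r cos0 sin0 mulr1 mulr0. Qed.

Lemma ppowV_real_natmul p n (a : R) :
  (ppow p (n%:R * a)%:C)^-1 = (expR (- (a * ln (p%:R : R))) ^+ n)%:C.
Proof.
rewrite ppowR -fmorphV -expRN -expRM_natl; congr (expR _)%:C.
by rewrite mulrN mulrA mulr_natl.
Qed.

Lemma ppowDV p a b :
  (ppow p (a + b))^-1 = (ppow p a)^-1 * (ppow p b)^-1.
Proof. by rewrite ppowD invfM. Qed.

Lemma normc_ppow p s : normc (ppow p s) = expR (complex.Re s * ln (p%:R : R)).
Proof.
rewrite /ppow /= !exprMn -mulrDr cos2Dsin2 mulr1.
by rewrite sqrtr_sqr ger0_norm // expR_ge0.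
Qed.

Lemma normc_ppowV_le p (theta : R) s : (0 < p)%N -> theta <= complex.Re s ->
  normc (ppow p s)^-1 <= expR (- (theta * ln (p%:R : R))).
Proof.
move=> p_gt0 s_ge; rewrite normcV normc_ppow -expRN ler_expR lerN2.
by rewrite ler_wpM2r // ln_ge0 // ler1n.
Qed.

Lemma expR_Nmul_ln_lt1 p (theta : R) : (1 < p)%N -> 0 < theta ->
  expR (- (theta * ln (p%:R : R))) < 1.
Proof.
by move=> p_gt1 theta_gt0; rewrite expR_lt1 oppr_lt0 mulr_gt0 // ln_gt0 // ltr1n.
Qed.

End PrimePowers.

Local Open Scope classical_set_scope.

Lemma cvg_prod {K : numFieldType} {T : Type} (F : set_system T) {FF : Filter F}
    (I : Type) (r : seq I) (f : I -> T -> K) (l : I -> K) :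
  (forall i, f i x @[x --> F] --> l i) ->
  \prod_(i <- r) f i x @[x --> F] --> \prod_(i <- r) l i.
Proof.
move=> f_cvg; elim: r => [|i r IHr].
  by rewrite big_nil; under eq_cvg do rewrite big_nil; exact: cvg_cst.
by rewrite big_cons; under eq_cvg do rewrite big_cons; exact: cvgM.
Qed.

Section ComplexGeometricSeries.
Context {R : realType}.

Lemma cvg_exprC (y : R[i]) : normc y < 1 -> (y : R[i]^o) ^+ n @[n --> \oo] --> 0.
Proof.
move=> y_lt1; apply/cvgr0Pnorm_lt => -[a b]; rewrite ltcE /= => /andP[/eqP -> a_gt0].
have y_norm_lt1 : `|normc y| < 1 by rewrite ger0_norm ?normc_ge0.
near=> n; rewrite normrX normr_normc -rmorphXn ltcR.
rewrite -[X in X < _]ger0_norm ?exprn_ge0 ?normc_ge0 //.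
by near: n; exact: cvgr0_norm_lt (cvg_expr y_norm_lt1) _ a_gt0.
Unshelve. all: by end_near.
Qed.

Lemma cvg_geometric_sumC (y : R[i]) : normc y < 1 ->
  \sum_(m < N) (y : R[i]^o) ^+ m @[N --> \oo] --> (1 - y)^-1.
Proof.
move=> y_lt1; have y_neq1 : y != 1 by apply: contraTneq y_lt1 => ->; rewrite normc1 ltxx.
have -> : (fun N => \sum_(m < N) (y : R[i]^o) ^+ m) = series (geometric 1 y).
  apply/funext => N; rewrite /series /= big_mkord.
  by under [RHS]eq_bigr do rewrite mul1r.
have -> : (1 - y)^-1 = 1 * (1 - 0) / (1 - y) by rewrite subr0 !mul1r.
rewrite geometric_seriesE //.
by apply: cvgMr_tmp; apply: cvgMl_tmp; apply: cvgB; [exact: cvg_cst | exact: cvg_exprC].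
Qed.

End ComplexGeometricSeries.

Section EvenPartialSums.
Context {R : realType}.

Lemma B_partialE p k (u : 'I_k -> R[i]) N :
  B_partial p u 0 N = 2^-1 * (\prod_(i < k) \sum_(m < N) ((ppow p (u i))^-1) ^+ m
                             + \prod_(i < k) \sum_(m < N) (- (ppow p (u i))^-1) ^+ m).
Proof.
have monomialE (n : {ffun 'I_k -> 'I_N}) :
    (ppow p (\sum_i (n i : nat)%:R * u i))^-1 = \prod_i ((ppow p (u i))^-1) ^+ n i.
  by rewrite ppow_sum -prodfV; apply: eq_bigr => i _; rewrite ppowMn exprVn.
rewrite /B_partial (eq_bigl (fun n : {ffun 'I_k -> 'I_N} => ~~ odd (\sum_i (n i : nat)))).
  rewrite sum_even_weightE !bigA_distr_bigA /=; congr (_ * (_ + _)); apply: eq_bigr => n _.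
    exact: monomialE.
  under [RHS]eq_bigr do rewrite exprNn.
  by rewrite big_split /= prodrXr monomialE.
by move=> n; rewrite modn2; case: odd.
Qed.

Lemma cvg_B_partial p k (u : 'I_k -> R[i]) :
  (forall i, normc (ppow p (u i))^-1 < 1) ->
  B_partial p u 0 N @[N --> \oo] -->
    2^-1 * (\prod_(i < k) (1 - (ppow p (u i))^-1)^-1
            + \prod_(i < k) (1 + (ppow p (u i))^-1)^-1).
Proof.
move=> x_lt1; under eq_cvg do rewrite B_partialE.
have -> : \prod_(i < k) (1 + (ppow p (u i))^-1)^-1
          = \prod_(i < k) (1 - - (ppow p (u i))^-1)^-1.
  by apply: eq_bigr => i _; rewrite opprK.
by apply: cvgMl_tmp; apply: cvgD; apply: cvg_prod => i;
  apply: cvg_geometric_sumC; rewrite ?normcN.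
Qed.

End EvenPartialSums.

Lemma C_factorE {R : realType} p k (u : 'I_(2 * k) -> R[i]) :
  C_factor p u = C_poly (fun i => (ppow p (u i))^-1).
Proof. by rewrite /C_factor /C_poly; under eq_bigr do under eq_bigr do rewrite ppowDV. Qed.

Theorem lemmaA2 (R : realType) :
  (forall (k p : nat) (theta : R) (u : 'I_(2 * k) -> R[i]),
     (1 <= k)%N -> prime p -> 0 < theta ->
     (forall i, theta <= complex.Re (u i)) ->
     B_partial p u 0 N @[N --> \oo] -->
       (\prod_(i < 2 * k) \prod_(j < 2 * k | (i <= j)%N)
           (1 - (ppow p (u i + u j))^-1)^-1) * C_factor p u)
  /\
  (forall (k : nat) (theta : R), (1 <= k)%N -> 0 < theta ->
     exists K : R, forall (p : nat) (u : 'I_(2 * k) -> R[i]),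
       prime p -> (forall i, theta <= complex.Re (u i)) ->
       `|C_factor p u - 1| <= (Complex K 0) * (ppow p (Complex (4 * theta) 0))^-1).
Proof.
split=> [k p theta u _ p_prime theta_gt0 u_ge | k theta _ theta_gt0].
  have x_lt1 i : normc (ppow p (u i))^-1 < 1.
    apply: le_lt_trans (normc_ppowV_le _ _ _ (prime_gt0 p_prime) (u_ge i)) _.
    exact: expR_Nmul_ln_lt1 _ _ (prime_gt1 p_prime) theta_gt0.
  under eq_bigr do under eq_bigr do rewrite ppowDV.
  rewrite C_factorE -even_geometric_productsE => [|i]; first exact: cvg_B_partial.
  by rewrite normr_normc ltcR.
have [K C_le] := C_poly_sub1_bigO R (2 * k).
exists K => p u p_prime u_ge.
have t01 : 0 <= expR (- (theta * ln (p%:R : R))) <= 1.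
  by rewrite expR_ge0 ltW // expR_Nmul_ln_lt1 // prime_gt1.
rewrite (ppowV_real_natmul p 4) -[Complex K 0]/(K%:C) normr_normc -rmorphM lecR C_factorE.
by apply: C_le => // i; apply: normc_ppowV_le; rewrite ?prime_gt0.
Qed.
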